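(* Let $\mathcal{S}\subseteq\mathcal{X}\times\mathcal{Y}$, $f:\mathcal{X}\times\mathcal{Y}\to\mathcal{V}$, and suppose $\mathcal{A}\times\mathcal{B}\subseteq\mathcal{X}\times\mathcal{Y}$ is solvable for $(\mathcal{S},f)$. Then for any $n$, $\mathbf{x}\in\mathcal{A}^n$, $\mathbf{y}\in\mathcal{B}^n$ with $(x_i,y_i)\in\mathcal{S}$ for all $i$, the type $f_n^{\mathsf t}(\mathbf{x},\mathbf{y})$ is uniquely determined by $P_{\mathbf{x}}$ and $P_{\mathbf{y}}$. More precisely, any two joint types $P^{(1)},P^{(2)}\in\mathcal{P}_n(\mathcal{A}\times\mathcal{B})$ with $\mathsf{supp}(P^{(j)})\subseteq\mathcal{S}$ and $\sum_{y\in\mathcal{B}}P^{(j)}(x,y)=P_{\mathbf{x}}(x)$ for all $x\in\mathcal{A}$, $\sum_{x\in\mathcal{A}}P^{(j)}(x,y)=P_{\mathbf{y}}(y)$ for all $y\in\mathcal{B}$ ($j=1,2$) satisfy $$\sum_{(x,y)\in\mathcal{A}\times\mathcal{B}:f(x,y)=v}P^{(1)}(x,y)=\sum_{(x,y)\in\mathcal{A}\times\mathcal{B}:f(x,y)=v}P^{(2)}(x,y)\quad\forall v\in\mathcal{V}.$$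
   Context: Finite alphabets. Types: $P_{\mathbf{s}}(s)=|\{i:s_i=s\}|/n$; $\mathcal{P}_n(\cdot)$ is the set of types of length-$n$ sequences. $f_n^{\mathsf t}(\mathbf{x},\mathbf{y})$ is the type of $(f(x_1,y_1),\dots,f(x_n,y_n))$. For $\mathcal{A}\times\mathcal{B}\subseteq\mathcal{X}\times\mathcal{Y}$, a simple loop is a set $\{(a_0,b_0),(a_0,b_1),(a_1,b_1),(a_1,b_2),\dots,(a_{k-2},b_{k-1}),(a_{k-1},b_{k-1}),(a_{k-1},b_0)\}\subseteq(\mathcal{A}\times\mathcal{B})\cap\mathcal{S}$ with the $a_i$ pairwise distinct and the $b_i$ pairwise distinct. For $v\in\mathcal{V}$ let $\mathcal{I}_+(v)=\{i: f(a_i,b_i)=v\}$ and $\mathcal{I}_-(v)=\{i: f(a_i,b_{i+1\bmod k})=v\}$. $\mathcal{A}\times\mathcal{B}$ is solvable for $(\mathcal{S},f)$ if every simple loop in it satisfies $|\mathcal{I}_+(v)|=|\mathcal{I}_-(v)|$ for all $v\in\mathcal{V}$. *)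

From HB Require Import structures.
From mathcomp Require Import all_boot all_order all_algebra.
Set Implicit Arguments. Unset Strict Implicit. Unset Printing Implicit Defensive.
Import Order.TTheory GRing.Theory Num.Theory.

Definition type_of (T : eqType) (s : seq T) (t : T) : rat :=
  ((count_mem t s)%:R / (size s)%:R)%R.

Definition simple_loop (X Y : finType) (S : {set X * Y}) (A : {set X}) (B : {set Y})
    (k : nat) (a : 'I_k -> X) (b : 'I_k -> Y) : Prop :=
  injective a /\ injective b /\
  (forall i, a i \in A) /\ (forall i, b i \in B) /\
  (forall i, (a i, b i) \in S) /\
  (forall i, (a i, b (ordS i)) \in S).

Definition Iplus (X Y : finType) (V : eqType) (f : X -> Y -> V) (k : nat)
    (a : 'I_k -> X) (b : 'I_k -> Y) (v : V) : {set 'I_k} :=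
  [set i | f (a i) (b i) == v].
Definition Iminus (X Y : finType) (V : eqType) (f : X -> Y -> V) (k : nat)
    (a : 'I_k -> X) (b : 'I_k -> Y) (v : V) : {set 'I_k} :=
  [set i | f (a i) (b (ordS i)) == v].

Definition solvable (X Y : finType) (V : eqType) (S : {set X * Y}) (f : X -> Y -> V)
    (A : {set X}) (B : {set Y}) : Prop :=
  forall k (a : 'I_k -> X) (b : 'I_k -> Y), simple_loop S A B a b ->
    forall v : V, #|Iplus f a b v| = #|Iminus f a b v|.

From HB Require Import structures.
From mathcomp Require Import all_boot all_order all_algebra zify.
Set Implicit Arguments. Unset Strict Implicit. Unset Printing Implicit Defensive.
Import Order.TTheory GRing.Theory Num.Theory.

(* Let D := P1 - P2: it is supported in S :&: setX A B and all its row and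
   column sums vanish, so it suffices that every such D has zero mass on each
   level set of f.  Induct on the size of the support of D, seen as the edge set
   of a bipartite graph on X + Y.  If D (x0, y0) != 0, then x0 and y0 stay
   connected once the edge (x0, y0) is removed: otherwise, weighting D by the
   indicator of the component of y0 gives a vanishing sum in which only the
   term D (x0, y0) survives.  A duplicate-free connecting path closes into a simple
   loop through (x0, y0); its signed edge indicator has zero marginals and, by
   solvability, zero mass on every level set of f.  Adding D (x0, y0) times it
   to D deletes (x0, y0) from the support without creating new edges. *)

Section Marginals.
Variables (R : pzRingType) (X Y : finType).
Local Open Scope ring_scope.

Definition zero_marginals (D : X * Y -> R) :=
  (forall x, \sum_(p | p.1 == x) D p = 0) /\ (forall y, \sum_(p | p.2 == y) D p = 0).

Lemma sum_fst_eq (F : X * Y -> R) x : \sum_(p | p.1 == x) F p = \sum_y F (x, y).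
Proof.
have -> : \sum_y F (x, y) = \sum_(x' | x' == x) \sum_y F (x', y) by rewrite big_pred1_eq.
by rewrite pair_big_dep; apply: eq_big => [p|[]] //=; rewrite andbT.
Qed.

Lemma sum_snd_eq (F : X * Y -> R) y : \sum_(p | p.2 == y) F p = \sum_x F (x, y).
Proof.
have -> : \sum_x F (x, y) = \sum_x \sum_(y' | y' == y) F (x, y').
  by apply: eq_bigr => x _; rewrite big_pred1_eq.
by rewrite pair_big_dep; apply: eq_big => [p|[]].
Qed.

Lemma zero_marginals_setX (D : X * Y -> R) (A : {set X}) (B : {set Y}) :
    (forall p, p \notin setX A B -> D p = 0) ->
    (forall x, x \in A -> \sum_(y in B) D (x, y) = 0) ->
    (forall y, y \in B -> \sum_(x in A) D (x, y) = 0) ->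
  zero_marginals D.
Proof.
move=> D_out DA DB; split=> [x|y]; rewrite ?sum_fst_eq ?sum_snd_eq.
- have [xA|xA] := boolP (x \in A); last first.
    by rewrite big1 // => y _; rewrite D_out // inE (negbTE xA).
  rewrite -[LHS](big_rmcond _ _ (P := fun y => y \in B)) ?DA // => y yB.
  by rewrite D_out // inE xA.
- have [yB|yB] := boolP (y \in B); last first.
    by rewrite big1 // => x _; rewrite D_out // inE (negbTE yB) andbF.
  rewrite -[LHS](big_rmcond _ _ (P := fun x => x \in A)) ?DB // => x xA.
  by rewrite D_out // inE yB andbT.
Qed.

Lemma sum_mul_partition (I J : finType) (g : I -> J) (D : I -> R) (w : J -> R) :
  \sum_i D i * w (g i) = \sum_j (\sum_(i | g i == j) D i) * w j.
Proof.
rewrite (partition_big g xpredT) //; apply: eq_bigr => j _.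
by rewrite mulr_suml; apply: eq_bigr => i /eqP ->.
Qed.

Lemma zero_marginals_add_mul (D E : X * Y -> R) c :
  zero_marginals D -> zero_marginals E -> zero_marginals (fun p => D p + c * E p).
Proof.
move=> [D_fst D_snd] [E_fst E_snd].
by split=> [x|y]; rewrite big_split -mulr_sumr /= ?D_fst ?E_fst ?D_snd ?E_snd mulr0 addr0.
Qed.

End Marginals.

Lemma val_ordS n (i : 'I_n) : val (ordS i) = if i.+1 < n then i.+1 else 0.
Proof.
rewrite /=; case: ltnP => ilt; first by rewrite modn_small.
have -> : i.+1 = n by have := ltn_ord i; lia.
by rewrite modnn.
Qed.

Section BipartiteGraph.
Variables (X Y : finType) (E : pred (X * Y)).

Definition bip_edge : rel (X + Y) := fun u w =>
  match u, w with
  | inl x, inr y | inr y, inl x => E (x, y)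
  | _, _ => false
  end.

Definition is_left (u : X + Y) := if u is inl _ then true else false.

Lemma bip_path_parity y0 p j : path bip_edge (inr y0) p -> j <= size p ->
  is_left (nth (inr y0) (inr y0 :: p) j) = odd j.
Proof.
move=> /(pathP (inr y0)) p_edge; elim: j => [//|j IHj] jp.
move: (p_edge j jp) (IHj (ltnW jp)) => /=.
by case: (nth _ _ j) => ?; case: (nth _ _ j) => ? //= _ <-.
Qed.

Lemma connect_bip_edge z x y : E (x, y) ->
  connect bip_edge z (inl x) = connect bip_edge z (inr y).
Proof.
by move=> Exy; apply/idP/idP => /connect_trans; apply; apply: connect1.
Qed.

(* The vertices of a duplicate-free path alternate between Y and X: the even ones
   give b, the odd ones give a, and the last one is x0. *)
Lemma simple_loop_of_connect x0 y0 : connect bip_edge (inr y0) (inl x0) ->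
  exists k (a : 'I_k -> X) (b : 'I_k -> Y) (j : 'I_k),
  [/\ injective a, injective b, (a j, b (ordS j)) = (x0, y0),
      forall i, E (a i, b i) & forall i, i != j -> E (a i, b (ordS i))].
Proof.
move=> /connectP [p0 /shortenP [p p_path p_uniq _] p_last].
set q := inr y0 :: p; set s := size p.
have q_edge j : j < s -> bip_edge (nth (inr y0) q j) (nth (inr y0) q j.+1).
  exact: (pathP (inr y0) p_path).
have q_last : nth (inr y0) q s = inl x0 by rewrite p_last (last_nth (inr y0)).
have odd_s : odd s by rewrite -(bip_path_parity p_path) // q_last.
set k := s.+1./2; have s_k : s.+1 = k.*2 by rewrite -[LHS]odd_double_half /= odd_s.
pose a (i : 'I_k) := if nth (inr y0) q (2 * i).+1 is inl x then x else x0.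
pose b (i : 'I_k) := if nth (inr y0) q (2 * i) is inr y then y else y0.
have q_a (i : 'I_k) : nth (inr y0) q (2 * i).+1 = inl (a i).
  have /(bip_path_parity p_path) : (2 * i).+1 <= s by have := ltn_ord i; lia.
  by rewrite /a /= oddM andFb; case: nth.
have q_b (i : 'I_k) : nth (inr y0) q (2 * i) = inr (b i).
  have /(bip_path_parity p_path) : 2 * i <= s by have := ltn_ord i; lia.
  by rewrite /b oddM andFb; case: nth.
have q_inj m n : m < k.*2 -> n < k.*2 ->
    nth (inr y0) q m = nth (inr y0) q n -> m = n.
  by rewrite -s_k => ms ns /eqP; rewrite nth_uniq // => /eqP.
have j_lt : k.-1 < k by lia.
exists k, a, b, (Ordinal j_lt); split.
- move=> i i' eq_a; apply: ord_inj; suff: (2 * i).+1 = (2 * i').+1 by lia.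
  apply: q_inj; [have := ltn_ord i; lia | have := ltn_ord i'; lia | by rewrite !q_a eq_a].
- move=> i i' eq_b; apply: ord_inj; suff: 2 * i = 2 * i' by lia.
  apply: q_inj; [have := ltn_ord i; lia | have := ltn_ord i'; lia | by rewrite !q_b eq_b].
- have jS : val (ordS (Ordinal j_lt)) = 0 by rewrite val_ordS /=; case: ifP => //; lia.
  have := q_b (ordS (Ordinal j_lt)); rewrite jS muln0 /= => -[<-].
  have := q_a (Ordinal j_lt); have -> : (2 * k.-1).+1 = s by lia.
  by rewrite q_last => -[<-].
- by move=> i; have := q_edge (2 * i); rewrite q_a q_b /=; apply; have := ltn_ord i; lia.
- move=> i /eqP ne_i; have lt_i : i.+1 < k.
    have : nat_of_ord i <> k.-1 by move=> eq_i; apply: ne_i; apply: ord_inj.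
    by have := ltn_ord i; lia.
  have := q_edge (2 * i).+1; rewrite q_a.
  have -> : (2 * i).+2 = 2 * ordS i by rewrite val_ordS lt_i; lia.
  by rewrite q_b; apply; rewrite val_ordS lt_i; lia.
Qed.

End BipartiteGraph.

Section LoopCharge.
Variables (R : pzRingType) (X Y : finType) (k : nat) (a : 'I_k -> X) (b : 'I_k -> Y).
Local Open Scope ring_scope.

Definition loop_charge (p : X * Y) : R :=
  \sum_(i < k) ((a i, b i) == p)%:R - \sum_(i < k) ((a i, b (ordS i)) == p)%:R.

Lemma sum_loop_charge (P : pred (X * Y)) :
  \sum_(p | P p) loop_charge p =
  #|[set i | P (a i, b i)]|%:R - #|[set i | P (a i, b (ordS i))]|%:R.
Proof.
have count_edges (e : 'I_k -> X * Y) :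
    \sum_(p | P p) \sum_(i < k) (e i == p)%:R = #|[set i | P (e i)]|%:R :> R.
  rewrite exchange_big -sum1_card natr_sum [RHS]big_mkcond /=.
  apply: eq_bigr => i _; rewrite inE; have [Pe|nPe] := boolP (P (e i)).
    rewrite (bigD1 (e i)) //= eqxx big1 ?addr0 // => p /andP [_ ne_p].
    by rewrite eq_sym (negbTE ne_p).
  by rewrite big1 // => p Pp; case: eqP nPe => // ->; rewrite Pp.
by rewrite /loop_charge sumrB !count_edges.
Qed.

Lemma loop_charge_zero_marginals : zero_marginals loop_charge.
Proof.
split=> [x|y]; rewrite sum_loop_charge /=; first by rewrite subrr.
suff -> : [set i | b (ordS i) == y] = @ordS k @^-1: [set i | b i == y].
  by rewrite card_preimset ?subrr //; apply: ordS_inj.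
by apply/setP => i; rewrite !inE.
Qed.

Lemma loop_chargeE p :
  loop_charge p = #|[set i | (a i, b i) == p]|%:R - #|[set i | (a i, b (ordS i)) == p]|%:R.
Proof. by rewrite -(sum_loop_charge (pred1 p)) big_pred1_eq. Qed.

Lemma loop_charge_eq0 p : (forall i, (a i, b i) != p) ->
  (forall i, (a i, b (ordS i)) != p) -> loop_charge p = 0.
Proof.
move=> ne_plus ne_minus; rewrite loop_chargeE !eq_card0 ?subrr // => i.
  by rewrite !inE (negbTE (ne_minus i)).
by rewrite !inE (negbTE (ne_plus i)).
Qed.

Lemma loop_charge_closing j : injective a ->
  (forall i, (a i, b i) != (a j, b (ordS j))) -> loop_charge (a j, b (ordS j)) = -1.
Proof.
move=> a_inj ne_plus; rewrite loop_chargeE eq_card0 => [|i]; last first.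
  by rewrite !inE (negbTE (ne_plus i)).
suff -> : [set i | (a i, b (ordS i)) == (a j, b (ordS j))] = [set j].
  by rewrite cards1 sub0r.
apply/setP => i; rewrite !inE xpair_eqE (inj_eq a_inj).
by case: eqP => [->|]; rewrite ?eqxx.
Qed.

Lemma support_cancel_loop_edge (D : X * Y -> R) j : injective a ->
    (forall i, (a i, b i) != (a j, b (ordS j))) ->
    (forall i, D (a i, b i) != 0 /\ D (a i, b (ordS i)) != 0) ->
  forall p, D p + D (a j, b (ordS j)) * loop_charge p != 0 ->
    (D p != 0) && (p != (a j, b (ordS j))).
Proof.
move=> a_inj ne_plus D_loop p D'p; apply/andP; split; apply: contra D'p.
  move=> /eqP Dp; rewrite Dp add0r loop_charge_eq0 ?mulr0 // => i.
    by apply: contraNneq (proj1 (D_loop i)) => ->; apply/eqP.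
  by apply: contraNneq (proj2 (D_loop i)) => ->; apply/eqP.
by move=> /eqP ->; rewrite loop_charge_closing // mulrN1 subrr.
Qed.

End LoopCharge.

Section SupportLoops.
Variables (R : pzRingType) (X Y : finType).
Local Open Scope ring_scope.

Lemma connect_support_edge (D : X * Y -> R) x0 y0 :
    zero_marginals D -> D (x0, y0) != 0 ->
  connect (bip_edge [pred p | (D p != 0) && (p != (x0, y0))]) (inr y0) (inl x0).
Proof.
move=> [D_fst D_snd] D_e0; apply: contraT => nconn.
pose c u : R := (connect (bip_edge [pred p | (D p != 0) && (p != (x0, y0))]) (inr y0) u)%:R.
have flow0 : \sum_p D p * (c (inr p.2) - c (inl p.1)) = 0.
  under eq_bigr do rewrite mulrBr.
  rewrite sumrB (sum_mul_partition snd D (fun y => c (inr y))).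
  rewrite (sum_mul_partition fst D (fun x => c (inl x))).
  by rewrite !big1 ?subrr // => ? _; rewrite ?D_fst ?D_snd mul0r.
move: flow0; rewrite (bigD1 (x0, y0)) //= big1 ?addr0 => [|[x y] /= ne_p].
  by rewrite /c connect0 (negbTE nconn) subr0 mulr1 => /eqP; rewrite (negbTE D_e0).
have [->|Dp] := eqVneq (D (x, y)) 0; first by rewrite mul0r.
by rewrite /c (@connect_bip_edge _ _ _ _ x y) ?subrr ?mulr0 //= Dp ne_p.
Qed.

Lemma support_edge_on_loop (D : X * Y -> R) x0 y0 :
    zero_marginals D -> D (x0, y0) != 0 ->
  exists k (a : 'I_k -> X) (b : 'I_k -> Y) (j : 'I_k),
  [/\ injective a, injective b, (a j, b (ordS j)) = (x0, y0),
      forall i, (a i, b i) != (x0, y0)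
    & forall i, D (a i, b i) != 0 /\ D (a i, b (ordS i)) != 0].
Proof.
move=> D_marg D_e0; have [k [a [b [j [a_inj b_inj ab_j E_plus E_minus]]]]] :=
  simple_loop_of_connect (connect_support_edge D_marg D_e0).
exists k, a, b, j; split=> // i; first by have /andP [] := E_plus i.
split; first by have /andP [] := E_plus i.
by have [->|/E_minus /andP []//] := eqVneq i j; rewrite ab_j.
Qed.

End SupportLoops.

Section Solvable.
Variables (R : pzRingType) (X Y V : finType) (S : {set X * Y}) (f : X -> Y -> V).
Variables (A : {set X}) (B : {set Y}).
Hypothesis f_solvable : solvable S f A B.
Local Open Scope ring_scope.

Lemma simple_loop_of_edges k (a : 'I_k -> X) (b : 'I_k -> Y) :
    injective a -> injective b ->
    (forall i, (a i, b i) \in S :&: setX A B) ->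
    (forall i, (a i, b (ordS i)) \in S :&: setX A B) ->
  simple_loop S A B a b.
Proof.
move=> a_inj b_inj ab_S abS_S; do 2 split=> //.
by do ![split] => i; [move: (ab_S i) | move: (ab_S i) | move: (ab_S i) | move: (abS_S i)];
  rewrite !inE => /and3P [].
Qed.

Lemma solvable_level_sum0 (D : X * Y -> R) :
    (forall p, D p != 0 -> p \in S :&: setX A B) -> zero_marginals D ->
  forall v, \sum_(p | f p.1 p.2 == v) D p = 0.
Proof.
move=> + + v; move: {2}#|[pred p | D p != 0]| (leqnn #|[pred p | D p != 0]|) => N.
elim: N D => [|N IHN] D supp_N D_supp D_marg.
  rewrite big1 // => p _; apply/eqP; apply: contraTT supp_N => Dp.
  by rewrite -ltnNge; apply/card_gt0P; exists p.
have [[x0 y0] /= D_e0|D0] := pickP [pred p | D p != 0]; last first.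
  by rewrite big1 // => p _; apply/eqP/negbFE/D0.
have [k [a [b [j [a_inj b_inj ab_j ne_e0 D_loop]]]]] := support_edge_on_loop D_marg D_e0.
rewrite -ab_j in D_e0 ne_e0.
have loop : simple_loop S A B a b.
  by apply: simple_loop_of_edges => // i; apply: D_supp; case: (D_loop i).
pose D' p := D p + D (a j, b (ordS j)) * loop_charge R a b p.
have D'_supp := support_cancel_loop_edge a_inj ne_e0 D_loop.
suff : \sum_(p | f p.1 p.2 == v) D' p = 0.
  rewrite big_split -mulr_sumr sum_loop_charge /=.
  by have := f_solvable loop v; rewrite /Iplus /Iminus => ->; rewrite subrr mulr0 addr0.
apply: IHN => [|p /D'_supp /andP [/D_supp //]|].
- rewrite -ltnS; apply: leq_trans supp_N.
  rewrite (cardD1 (a j, b (ordS j)) [pred p | D p != 0]) inE D_e0 ltnS.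
  by apply: subset_leq_card; apply/subsetP => p; rewrite !inE => /D'_supp /andP [-> ->].
- apply: zero_marginals_add_mul => //; exact: loop_charge_zero_marginals.
Qed.

End Solvable.

Lemma type_of_eq0 (T : eqType) (s : seq T) t : t \notin s -> type_of s t = 0%R.
Proof. by move=> /count_memPn s_t; rewrite /type_of s_t mul0r. Qed.

Theorem lemma2 (X Y : finType) (V : finType) (S : {set X * Y}) (f : X -> Y -> V)
    (A : {set X}) (B : {set Y}) :
  solvable S f A B ->
  forall (n : nat) (x : n.-tuple X) (y : n.-tuple Y),
    (forall i : 'I_n, tnth x i \in A) ->
    (forall i : 'I_n, tnth y i \in B) ->
    (forall i : 'I_n, (tnth x i, tnth y i) \in S) ->
  forall z1 z2 : n.-tuple (X * Y),
    (forall p, p \in z1 -> p \in setX A B) ->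
    (forall p, p \in z2 -> p \in setX A B) ->
    (forall p, type_of z1 p != 0%R -> p \in S) ->
    (forall p, type_of z2 p != 0%R -> p \in S) ->
    (forall a, a \in A -> (\sum_(b in B) type_of z1 (a, b))%R = type_of x a) ->
    (forall b, b \in B -> (\sum_(a in A) type_of z1 (a, b))%R = type_of y b) ->
    (forall a, a \in A -> (\sum_(b in B) type_of z2 (a, b))%R = type_of x a) ->
    (forall b, b \in B -> (\sum_(a in A) type_of z2 (a, b))%R = type_of y b) ->
  forall v : V,
    (\sum_(p in setX A B | f p.1 p.2 == v) type_of z1 p)%R =
    (\sum_(p in setX A B | f p.1 p.2 == v) type_of z2 p)%R.
Proof.
move=> f_solvable n x y _ _ _ z1 z2 z1_AB z2_AB z1_S z2_S z1_fst z1_snd z2_fst z2_snd v.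
pose D p := (type_of z1 p - type_of z2 p)%R.
have type_out (z : seq (X * Y)) p :
    {subset z <= setX A B} -> p \notin setX A B -> type_of z p = 0%R.
  by move=> zAB /(contra (zAB p)) /type_of_eq0.
have D_out p : p \notin setX A B -> D p = 0%R.
  by move=> pAB; rewrite /D (type_out _ _ z1_AB pAB) (type_out _ _ z2_AB pAB) subrr.
have D_supp p : D p != 0%R -> p \in S :&: setX A B.
  apply: contraR; rewrite inE negb_and => /orP [pS|/D_out ->]; last by rewrite eqxx.
  move: (contra (z1_S p) pS) (contra (z2_S p) pS); rewrite !negbK => /eqP z1p /eqP z2p.
  by rewrite /D z1p z2p subrr.
have D_marg : zero_marginals D.
  apply: zero_marginals_setX D_out _ _ => [a aA|b bB]; rewrite sumrB.
    by rewrite z1_fst ?z2_fst ?subrr.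
  by rewrite z1_snd ?z2_snd ?subrr.
apply/eqP; rewrite -subr_eq0 -sumrB; apply/eqP.
rewrite -[RHS](solvable_level_sum0 f_solvable D_supp D_marg v) big_mkcondl.
by apply: eq_bigr => p _; case: ifP => // /negbT /D_out.
Qed.
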